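(* The natural density of Carmichael polynomials in $\mathbb{F}_q[t]$ is zero, that is, $$\lim_{n\to\infty}\frac{C_q(1)+C_q(2)+\cdots+C_q(n)}{q^n}=0.$$
   Context: $\mathbb{F}_q$ is the finite field with $q$ elements. A finite ring $S$ is a Carmichael ring if $S$ is not a field and $a^{|S|}=a$ for every $a\in S$. A polynomial $f\in\mathbb{F}_q[t]$ is a Carmichael polynomial if $\mathbb{F}_q[t]/(f)$ is a Carmichael ring. $C_q(n)$ denotes the number of monic Carmichael polynomials in $\mathbb{F}_q[t]$ of degree $n$. *)

From HB Require Import structures.
From mathcomp Require Import all_boot all_order all_algebra.
Set Implicit Arguments. Unset Strict Implicit. Unset Printing Implicit Defensive.
Import GRing.Theory.
Local Open Scope ring_scope.

Definition is_field_ring (S : finComNzRingType) : bool :=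
  [forall a : S, (a != 0) ==> [exists b : S, a * b == 1]].

Definition carmichael_ring (S : finComNzRingType) : bool :=
  ~~ is_field_ring S && [forall a : S, a ^+ #|S| == a].

HB.instance Definition _ (F : finFieldType) (f : {poly F}) :=
  Finite.on {poly %/ f}.

(* f is a Carmichael polynomial if F[t]/(f) is a Carmichael ring.
   {poly %/ f} (mathcomp qpoly) is F[t]/(f) whenever f is monic of
   degree >= 1, which is the only case used below. *)
Definition carmichael_poly (F : finFieldType) (f : {poly F}) : bool :=
  carmichael_ring {poly %/ f}.

Definition Cq (F : finFieldType) (n : nat) : nat :=
  #|[set p : {poly_(n.+1) F} | [&& (val p) \is monic, size (val p) == n.+1
                                 & carmichael_poly (val p)]]|.

From HB Require Import structures.
From mathcomp Require Import all_boot all_order all_algebra all_fingroup all_solvable all_field.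
From mathcomp Require Import zify.
Import Order.TTheory GRing.Theory Num.Theory FinRing.Theory.
Local Open Scope ring_scope.
Set Implicit Arguments. Unset Strict Implicit. Unset Printing Implicit Defensive.

(* A Carmichael polynomial f of degree n satisfies X^(q^n) = X in F[t]/(f), so
   it divides X^(q^n) - X.  Over a splitting field a monic degree-n divisor has
   n distinct roots.  A root a whose Frobenius orbit has d elements satisfies
   a^(q^d) = a, so there are at most q^d such roots, and d divides n; a monic
   degree-n divisor vanishing at a vanishes on the whole orbit, hence is
   determined by its n - d coefficients of degrees d..n-1.  Counting pairs
   (divisor, root) gives n C_q(n) <= tau(n) q^n, and tau(n) <= M + n/M + 2
   yields M C_q(n) <= 2 q^n once n >= M(M+2); summing, the density is
   eventually at most 5/M. *)

Lemma natr_card (R : finNzRingType) : #|R|%:R = 0 :> R.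
Proof. by rewrite -zmodXgE -cardsT expg_cardG ?inE. Qed.

Lemma pnat_pchar_card (F : finFieldType) : ([pchar F].-nat #|F|)%N.
Proof.
have [p _ pF] := finPcharP F; rewrite (eq_pnat _ (pcharf_eq pF)).
by have := abelem_pgroup (fin_ring_pchar_abelem pF); rewrite /pgroup cardsT.
Qed.

Section FrobeniusPower.
Variables (F L : finFieldType) (iota : {rmorphism F -> L}).
Local Notation q := #|F|.

Lemma pnat_pchar_card_rmorph : ([pchar L].-nat q)%N.
Proof.
have [p _ pF] := finPcharP F.
rewrite (eq_pnat _ (pcharf_eq (rmorph_pchar iota pF))) -(eq_pnat _ (pcharf_eq pF)).
exact: pnat_pchar_card.
Qed.

Definition frobq (x : L) := x ^+ q.

Lemma frobq_is_nmod_morphism : nmod_morphism frobq.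
Proof.
split=> [|x y]; last exact: exprDn_pchar pnat_pchar_card_rmorph.
by rewrite /frobq expr0n; case: q (finNzRing_gt1 F).
Qed.

Lemma frobq_is_monoid_morphism : monoid_morphism frobq.
Proof. by split=> [|x y]; rewrite /frobq ?expr1n ?exprMn. Qed.

HB.instance Definition _ :=
  GRing.isNmodMorphism.Build L L frobq frobq_is_nmod_morphism.
HB.instance Definition _ :=
  GRing.isMonoidMorphism.Build L L frobq frobq_is_monoid_morphism.

Lemma frobq_inj : injective frobq. Proof. exact: fmorph_inj. Qed.

Lemma iter_frobq k x : iter k frobq x = x ^+ (q ^ k).
Proof. by elim: k => [|k IHk]; rewrite ?expr1 // iterS IHk /frobq -exprM expnSr. Qed.

Lemma root_frobq (f : {poly F}) x :
  root (map_poly iota f) x -> root (map_poly iota f) (frobq x).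
Proof.
move/(rmorph_root frobq); rewrite -map_poly_comp.
by rewrite (eq_map_poly (g := iota)) // => c /=; rewrite /frobq -rmorphXn expf_card.
Qed.

End FrobeniusPower.

Lemma order_dvdn (T : finType) (f : T -> T) (f_inj : injective f) x k :
  iter k f x = x -> (fingraph.order f x %| k)%N.
Proof.
move=> fkx; set d := fingraph.order f x.
have iter_mul c : iter (c * d) f x = x.
  by elim: c => // c IHc; rewrite mulSn iterD IHc fingraph.iter_order.
have fmod : iter (k %% d)%N f x = x.
  by rewrite {1}(divn_eq k d) addnC iterD iter_mul in fkx.
apply/eqP; case def_r: (k %% d)%N fmod => [//|r] fr.
have r_lt : (r.+1 < d)%N by rewrite -def_r ltn_mod fingraph.order_gt0.
have := fingraph.findex_iter r_lt; rewrite fr /fingraph.findex /fingraph.orbit.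
by rewrite -(fingraph.orderSpred f x) /= eqxx.
Qed.

Lemma card_fixed_expr_le (R : finIdomainType) k : (1 < k)%N ->
  (#|[pred a : R | a ^+ k == a]| <= k)%N.
Proof.
move=> k_gt1; set p : {poly R} := 'X^k - 'X.
have size_p : size p = k.+1 by rewrite size_polyDl size_polyXn // size_polyN size_polyX.
have p_neq0 : p != 0 by rewrite -size_poly_eq0 size_p.
have roots_p : all (root p) (enum [pred a : R | a ^+ k == a]).
  by apply/allP => a; rewrite mem_enum inE rootE !hornerE subr_eq0.
by have := max_poly_roots p_neq0 roots_p (enum_uniq _); rewrite -cardE size_p.
Qed.

Lemma eq_poly_on_roots (R : idomainType) (p1 p2 : {poly R}) (s : seq R) :
  uniq s -> all (root p1) s -> all (root p2) s ->
  (forall i, (size s <= i)%N -> p1`_i = p2`_i) -> p1 = p2.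
Proof.
move=> s_uniq roots1 roots2 high_eq.
apply/eqP; rewrite -subr_eq0; apply/negPn/negP => neq0.
have roots12 : all (root (p1 - p2)) s.
  apply/allP => a a_s; rewrite rootE hornerD hornerN.
  by rewrite (eqP (allP roots1 a a_s)) (eqP (allP roots2 a a_s)) subrr.
have := max_poly_roots neq0 roots12 s_uniq; rewrite ltnNge => /negP; apply.
by apply/leq_sizeP => i /high_eq; rewrite coefB => ->; rewrite subrr.
Qed.

Definition Xqn_X (F : finFieldType) n : {poly F} := 'X^(#|F| ^ n) - 'X.

Definition monic_dvd_Xqn_X (F : finFieldType) n := [set p : {poly_(n.+1) F} |
  [&& val p \is monic, size (val p) == n.+1 & val p %| Xqn_X F n]].

Section FrobeniusDivisors.
Variables (F L : finFieldType) (iota : {rmorphism F -> L}) (n : nat).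
Hypothesis n_gt0 : (0 < n)%N.
Variable rs : seq L.
Hypothesis Xqn_X_split : map_poly iota (Xqn_X F n) %= \prod_(z <- rs) ('X - z%:P).
Local Notation q := #|F|.
Local Notation D := (monic_dvd_Xqn_X F n).
Local Notation frob := (@frobq F L).
Local Notation order := (fingraph.order frob).

Lemma map_Xqn_X : map_poly iota (Xqn_X F n) = 'X^(q ^ n) - 'X.
Proof. by rewrite rmorphB /= map_polyXn map_polyX. Qed.

Lemma uniq_Xqn_X_roots : uniq rs.
Proof.
rewrite -separable_prod_XsubC -(eqp_separable Xqn_X_split) map_Xqn_X unlock.
rewrite derivB derivXn derivX -mulr_natr -polyC_natr natrX -(rmorph_nat iota).
rewrite natr_card rmorph0 expr0n eqn0Ngt n_gt0 /= polyC0 mulr0 sub0r.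
by apply/coprimepP => d _; rewrite dvdpNr dvdp1 size_poly_eq1.
Qed.

Lemma card_roots_dvd_Xqn_X (f : {poly F}) : size f = n.+1 -> f %| Xqn_X F n ->
  #|[pred a : L | root (map_poly iota f) a]| = n.
Proof.
move=> size_f f_dvd.
have : map_poly iota f %| \prod_(z <- rs) ('X - z%:P).
  by rewrite -(eqp_dvdr _ Xqn_X_split) dvdp_map.
case/dvdp_prod_XsubC=> m f_eqp.
have roots_f : [pred a | root (map_poly iota f) a] =i mask m rs.
  by move=> a; rewrite inE (eqp_root f_eqp) root_prod_XsubC.
rewrite (eq_card roots_f) (card_uniqP _) ?mask_uniq ?uniq_Xqn_X_roots //.
by have := eqp_size f_eqp; rewrite size_prod_XsubC size_map_poly size_f => -[].
Qed.

Lemma root_orbit_frobq (f : {poly F}) a b : root (map_poly iota f) a ->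
  b \in fingraph.orbit frob a -> root (map_poly iota f) b.
Proof.
move=> fa; rewrite -fingraph.fconnect_orbit => /fingraph.iter_findex <-.
by elim: (fingraph.findex _ _ _) => //= k; apply: root_frobq.
Qed.

Lemma frobq_order_dvdn a : root (map_poly iota (Xqn_X F n)) a -> (order a %| n)%N.
Proof.
rewrite map_Xqn_X rootE !hornerE subr_eq0 => /eqP fixed_a.
by apply: order_dvdn; [exact: frobq_inj iota | rewrite iter_frobq].
Qed.

Lemma card_monic_dvd_root_le a : (order a <= n)%N ->
  (#|[set f in D | root (map_poly iota (val f)) a]| <= q ^ (n - order a))%N.
Proof.
move=> order_le; set d := order a.
pose high (f : {poly_(n.+1) F}) := [ffun i : 'I_(n - d) => (val f)`_(d + i)].
have := @leq_card_in _ _ high; rewrite card_ffun card_ord; apply.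
have coef_high f i : f \in D -> (n <= i)%N -> (val f)`_i = (i == n)%:R.
  rewrite inE => /and3P[/monicP lc /eqP size_f _] n_le.
  case: ltngtP n_le => // [n_lt _ | <- _]; last by rewrite -lc lead_coefE size_f.
  by rewrite nth_default ?size_f.
move=> f1 f2 /setIdP[D1 r1] /setIdP[D2 r2] same_high.
apply/val_inj/(map_poly_inj iota)/(eq_poly_on_roots (fingraph.orbit_uniq _ a)).
- by apply/allP=> b; apply: root_orbit_frobq r1.
- by apply/allP=> b; apply: root_orbit_frobq r2.
move=> i; rewrite fingraph.size_orbit -/d !coef_map => d_le.
have [i_lt | n_le] := ltnP i n; last by rewrite !coef_high.
have idx : (i - d < n - d)%N by rewrite ltn_sub2r // (leq_ltn_trans d_le).
have := congr1 (fun h : {ffun _ -> F} => h (Ordinal idx)) same_high.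
by rewrite !ffunE /= subnKC // => ->.
Qed.

Lemma card_monic_dvd_root_le_sum a :
  (#|[set f in D | root (map_poly iota (val f)) a]| <=
   \sum_(d < n.+1 | d %| n) (if a ^+ (q ^ d) == a then q ^ (n - d) else 0))%N.
Proof.
have [ga | nga] := boolP (root (map_poly iota (Xqn_X F n)) a); last first.
  suff -> : [set f in D | root (map_poly iota (val f)) a] = set0 by rewrite cards0.
  apply/setP => f; rewrite !inE.
  apply/andP => -[/and3P[_ _ f_dvd] fa]; apply: (negP nga).
  by apply: root_dvdp fa; rewrite dvdp_map.
have order_dvd := frobq_order_dvdn ga.
have order_lt : (order a < n.+1)%N by rewrite ltnS dvdn_leq.
rewrite (bigD1 (Ordinal order_lt)) //= -iter_frobq fingraph.iter_order; last first.
  exact: frobq_inj iota.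
rewrite eqxx (leq_trans _ (leq_addr _ _)) //.
exact/card_monic_dvd_root_le/dvdn_leq.
Qed.

Lemma card_monic_dvd_Xqn_X_split_le :
  (n * #|D| <= #|[pred d : 'I_n.+1 | d %| n]| * q ^ n)%N.
Proof.
pose R (f : {poly_(n.+1) F}) (a : L) := root (map_poly iota (val f)) a.
have count_roots : (n * #|D| = \sum_(f in D) \sum_(a | R f a) 1)%N.
  rewrite mulnC -sum_nat_const; apply: eq_bigr => f.
  rewrite inE sum1_card => /and3P[_ /eqP size_f f_dvd].
  by rewrite card_roots_dvd_Xqn_X.
rewrite count_roots (exchange_big_dep xpredT) //=.
apply: (@leq_trans (\sum_a \sum_(d < n.+1 | d %| n)
                      (if a ^+ (q ^ d) == a then q ^ (n - d) else 0))).
  apply: leq_sum => a _; rewrite sum1_card.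
  apply: leq_trans (card_monic_dvd_root_le_sum a); apply/eq_leq/eq_card => f.
  by rewrite [RHS]inE.
rewrite exchange_big /= -sum_nat_const; apply: leq_sum => d d_dvd.
have d_gt0 : (0 < d)%N.
  by apply: contraTT d_dvd; rewrite -eqn0Ngt => /eqP ->; rewrite dvd0n -lt0n.
have q_gt1 := finNzRing_gt1 F.
rewrite -big_mkcond /= sum_nat_const.
apply: leq_trans (leq_mul (card_fixed_expr_le _ _) (leqnn _)) _.
  by rewrite (leq_trans q_gt1) // -{1}(expn1 q) leq_pexp2l // ltnW.
by rewrite -expnD subnKC // -ltnS.
Qed.

End FrobeniusDivisors.

Lemma card_monic_dvd_Xqn_X_le (F : finFieldType) n : (0 < n)%N ->
  (n * #|monic_dvd_Xqn_X F n| <= #|[pred d : 'I_n.+1 | d %| n]| * #|F| ^ n)%N.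
Proof.
move=> n_gt0; have q_gt1 := finNzRing_gt1 F.
have Xqn_X_neq0 : Xqn_X F n != 0.
  rewrite -size_poly_eq0 size_polyDl ?size_polyXn // size_polyN size_polyX ltnS.
  by rewrite (leq_trans q_gt1) // -{1}(expn1 #|F|) leq_pexp2l // ltnW.
have [L [rs Xqn_X_split _]] := FinSplittingFieldFor Xqn_X_neq0.
exact: (@card_monic_dvd_Xqn_X_split_le F (FinFieldExtType L) (in_alg L) n n_gt0 rs).
Qed.

Lemma carmichael_poly_dvd_Xqn_X (F : finFieldType) (f : {poly F}) n : (0 < n)%N ->
  f \is monic -> size f = n.+1 -> carmichael_poly f -> f %| Xqn_X F n.
Proof.
move=> n_gt0 f_monic size_f /andP[_ /forallP fixed].
have mk_f : mk_monic f = f by rewrite /mk_monic size_f ltnS n_gt0 f_monic.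
have := eqP (fixed (in_qpoly f 'X)).
rewrite card_monic_qpoly ?size_f // -rmorphXn => /(congr1 val) /=; rewrite mk_f => Xf.
rewrite Pdiv.Field.dvdpE; apply/Pdiv.Ring.rmodp_eq0P.
by rewrite Pdiv.RingMonic.rmodpB // Xf subrr.
Qed.

Section NatBounds.
Local Open Scope nat_scope.

Lemma card_divisors_le n m : 0 < n -> 0 < m ->
  #|[pred d : 'I_n.+1 | d %| n]| <= m.+1 + (n %/ m).+1.
Proof.
move=> n_gt0 m_gt0; rewrite -(cardID [pred d : 'I_n.+1 | d <= m]).
apply: leq_add.
  have := @leq_card_in _ _ (fun d : 'I_n.+1 => inord d : 'I_m.+1).
  rewrite card_ord; apply=> d1 d2; rewrite !inE => /andP[_ d1_le] /andP[_ d2_le].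
  by move/(congr1 val); rewrite /= !inordK // => /val_inj.
have := @leq_card_in _ _ (fun d : 'I_n.+1 => inord (n %/ d) : 'I_(n %/ m).+1).
rewrite card_ord; apply=> d1 d2; rewrite !inE -!ltnNge.
move=> /andP[m_lt1 d1_dvd] /andP[m_lt2 d2_dvd].
have div_le d : m < d -> n %/ d < (n %/ m).+1.
  by move=> m_lt; rewrite ltnS leq_div2l // ltnW.
move/(congr1 val); rewrite /= !inordK ?div_le // => same_div.
have div_div d : m < d -> d %| n -> n %/ (n %/ d) = d.
  move=> m_lt d_dvd; have d_gt0 : 0 < d := leq_ltn_trans (leq0n m) m_lt.
  by rewrite -{1}(divnK d_dvd) mulKn // divn_gt0 // dvdn_leq.
by apply: val_inj; rewrite /= -(div_div _ m_lt1 d1_dvd) same_div div_div.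
Qed.

Lemma sum_expn_le b n : 1 < b -> \sum_(k < n.+1) b ^ k <= 2 * b ^ n.
Proof.
move=> b_gt1; elim: n => [|n IHn]; first by rewrite big_ord1.
rewrite big_ord_recr /= expnS mul2n -addnn leq_add //.
by rewrite (leq_trans IHn) // leq_mul2r b_gt1 orbT.
Qed.

End NatBounds.

Section CarmichaelCount.
Local Open Scope nat_scope.
Variable F : finFieldType.
Local Notation q := #|F|.

Lemma q_gt1 : 1 < q. Proof. exact: finNzRing_gt1. Qed.

Lemma Cq_le_card_monic_dvd n : 0 < n -> Cq F n <= #|monic_dvd_Xqn_X F n|.
Proof.
move=> n_gt0; apply/subset_leq_card/subsetP => f; rewrite !inE.
case/and3P=> f_monic /eqP size_f f_carm.
by rewrite f_monic size_f eqxx carmichael_poly_dvd_Xqn_X.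
Qed.

Lemma Cq_le_card n : Cq F n <= q ^ n.+1.
Proof. by rewrite -card_npoly max_card. Qed.

Lemma Cq_le_large M n : 0 < M -> M * (M + 2) <= n -> M * Cq F n <= 2 * q ^ n.
Proof.
move=> M_gt0 n_ge.
have n_gt0 : 0 < n by apply: leq_trans n_ge; rewrite muln_gt0 M_gt0 addn_gt0 orbT.
have divs_le := card_divisors_le n_gt0 M_gt0.
have M_div_le : M * (n %/ M) <= n by rewrite mulnC leq_trunc_div.
rewrite -(leq_pmul2l n_gt0) mulnCA.
apply: (@leq_trans (M * (#|[pred d : 'I_n.+1 | d %| n]| * q ^ n))).
  rewrite leq_mul2l (leq_trans _ (card_monic_dvd_Xqn_X_le F n_gt0)) ?orbT //.
  by rewrite leq_mul2l Cq_le_card_monic_dvd ?orbT.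
rewrite mulnA mulnA leq_mul2r; apply/orP; right.
by rewrite (leq_trans (leq_mul (leqnn M) divs_le)) //; lia.
Qed.

Lemma sum_Cq_le M n : 0 < M -> M * (M + 2) * (M * q ^ (M * (M + 2))) <= n ->
  M * \sum_(1 <= k < n.+1) Cq F k <= 5 * q ^ n.
Proof.
set K := M * (M + 2) => M_gt0 n_ge.
have K_gt0 : 0 < K by rewrite muln_gt0 M_gt0 addn_gt0 orbT.
have K_le_n : K <= n.
  by apply: leq_trans n_ge; rewrite leq_pmulr // muln_gt0 M_gt0 expn_gt0 ltnW ?q_gt1.
rewrite big_distrr /= (@big_cat_nat _ _ _ K) //=; last exact: leqW.
rewrite (_ : 5 = 1 + 2 * 2) // mulnDl -mulnA; apply: leq_add.
  rewrite mul1n; apply: leq_trans (ltnW (ltn_expl n q_gt1)); apply: leq_trans n_ge.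
  apply: (@leq_trans (\sum_(1 <= k < K) M * q ^ K)).
    rewrite big_nat_cond [X in _ <= X]big_nat_cond.
    apply: leq_sum => k /andP[/andP[_ k_lt] _].
    rewrite leq_mul2l (leq_trans (Cq_le_card k)) ?orbT //.
    by rewrite leq_pexp2l // ltnW // q_gt1.
  by rewrite sum_nat_const_nat leq_mul2r leq_subr orbT.
apply: (@leq_trans (\sum_(0 <= k < n.+1) 2 * q ^ k)).
  rewrite (@big_cat_nat _ _ _ K 0) //; last exact: leqW.
  rewrite (leq_trans _ (leq_addl _ _)) //.
  rewrite big_nat_cond [X in _ <= X]big_nat_cond.
  apply: leq_sum => k /andP[/andP[K_le _] _].
  exact/Cq_le_large/(leq_trans _ K_le).
by rewrite -big_distrr big_mkord leq_mul2l sum_expn_le ?q_gt1.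
Qed.

End CarmichaelCount.

Theorem corollary4p7 (F : finFieldType) :
  forall eps : rat, 0 < eps ->
  exists N : nat, forall n : nat, (N <= n)%N ->
    ((\sum_(1 <= k < n.+1) Cq F k)%N)%:R / ((#|F| ^ n)%N)%:R < eps.
Proof.
move=> eps eps_gt0; set M := (Num.Def.archi_bound (5 / eps)).+1.
have M_gt : 5 < M%:R * eps.
  rewrite -ltr_pdivrMr // (lt_le_trans (archi_boundP _)) ?ler_nat //.
  by rewrite divr_ge0 // ltW.
exists (M * (M + 2) * (M * #|F| ^ (M * (M + 2))))%N => n n_ge.
have Q_gt0 : (0 : rat) < (#|F| ^ n)%N%:R by rewrite ltr0n expn_gt0 ltnW // q_gt1.
have M_gt0 : (0 : rat) < M%:R by rewrite ltr0Sn.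
rewrite ltr_pdivrMr // -(ltr_pM2l M_gt0).
apply: le_lt_trans (_ : 5 * (#|F| ^ n)%N%:R < _); last by rewrite mulrA ltr_pM2r.
by rewrite -!natrM ler_nat sum_Cq_le.
Qed.
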